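(* Let $R$ be a (unital, not necessarily commutative) ring, considered as a first-order structure in the language of rings. If either $R$ has characteristic zero or $R$ is an infinite domain (a ring without zero divisors), then $R$ does not have near linear Zarankiewicz bounds.
   Context: For a bipartite graph with vertex sorts $V,W$ and edge relation $E\subseteq V\times W$, it is $K_{m,n}$-free if it contains no complete bipartite subgraph with parts of sizes $m$ and $n$. A class $\mathcal{C}$ of finite bipartite graphs has near linear Zarankiewicz bounds if for every $m$ and every real $\varepsilon>0$ there is a real $\lambda>0$ such that every $K_{m,m}$-free member $\mathcal{G}$ of $\mathcal{C}$ has at most $\lambda|\mathcal{G}|^{1+\varepsilon}$ edges, where $|\mathcal{G}|$ is the number of vertices. A bipartite graph has near linear Zarankiewicz bounds if the class of its finite substructures does; a structure has near linear Zarankiewicz bounds if every bipartite graph definable (with parameters) in it does. *)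

From mathcomp Require Import all_boot all_algebra.
From Stdlib Require Rdefinitions Raxioms Rpower ClassicalEpsilon.

Set Implicit Arguments.
Unset Strict Implicit.
Unset Printing Implicit Defensive.

Import GRing.Theory.

(* A bipartite graph: vertex sorts are the subsets [inV] of [V] and [inW]
   of [W]; the edge relation is [E] (only considered on inV x inW). *)
Section Bipartite.
Variables (V W : eqType) (inV : V -> Prop) (inW : W -> Prop) (E : V -> W -> Prop).

Definition edgeb (a : V) (b : W) : bool :=
  if ClassicalEpsilon.excluded_middle_informative (E a b) then true else false.

(* A finite substructure is given by finite duplicate-free lists A, B of
   vertices of the two sorts, with the induced edge relation. *)
Definition fin_sub (A : seq V) (B : seq W) : Prop :=
  uniq A /\ uniq B /\ (forall a, a \in A -> inV a) /\ (forall b, b \in B -> inW b).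

Definition nverts (A : seq V) (B : seq W) : nat := size A + size B.

Definition nedges (A : seq V) (B : seq W) : nat :=
  \sum_(a <- A) count (fun b => edgeb a b) B.

Definition Kfree (m n : nat) (A : seq V) (B : seq W) : Prop :=
  ~ exists (A' : seq V) (B' : seq W),
      uniq A' /\ size A' = m /\ {subset A' <= A} /\
      uniq B' /\ size B' = n /\ {subset B' <= B} /\
      (forall a b, a \in A' -> b \in B' -> E a b).

Definition near_linear_zarankiewicz : Prop :=
  forall (m : nat) (eps : Rdefinitions.R), Rdefinitions.Rlt (Rdefinitions.IZR BinNums.Z0) eps ->
    exists lam : Rdefinitions.R, Rdefinitions.Rlt (Rdefinitions.IZR BinNums.Z0) lam /\
      forall (A : seq V) (B : seq W), fin_sub A B -> Kfree m m A B ->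
        Rdefinitions.Rle (Raxioms.INR (nedges A B))
          (Rdefinitions.Rmult lam
             (Rpower.Rpower (Raxioms.INR (nverts A B))
                (Rdefinitions.Rplus (Rdefinitions.IZR (BinNums.Zpos BinNums.xH)) eps))).
End Bipartite.

Section RingLogic.
Variable R : pzRingType.

Inductive rterm : Type :=
| TVar of nat
| TParam of R
| TZero
| TOne
| TAdd of rterm & rterm
| TOpp of rterm
| TMul of rterm & rterm.

Inductive rformula : Type :=
| FEq of rterm & rterm
| FNot of rformula
| FAnd of rformula & rformula
| FOr of rformula & rformula
| FExists of nat & rformula
| FForall of nat & rformula.

Fixpoint teval (e : nat -> R) (t : rterm) : R :=
  match t with
  | TVar i => e i
  | TParam r => r
  | TZero => 0%R
  | TOne => 1%R
  | TAdd t1 t2 => (teval e t1 + teval e t2)%R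
  | TOpp t1 => (- teval e t1)%R
  | TMul t1 t2 => (teval e t1 * teval e t2)%R
  end.

Definition upd (e : nat -> R) (i : nat) (x : R) : nat -> R :=
  fun j => if j == i then x else e j.

Fixpoint fholds (e : nat -> R) (f : rformula) : Prop :=
  match f with
  | FEq t1 t2 => teval e t1 = teval e t2
  | FNot g => ~ fholds e g
  | FAnd g h => fholds e g /\ fholds e h
  | FOr g h => fholds e g \/ fholds e h
  | FExists i g => exists x : R, fholds (upd e i x) g
  | FForall i g => forall x : R, fholds (upd e i x) g
  end.

(* environment assigning the entries of s to variables 0,1,..., and 0 to
   the remaining variables *)
Definition env_of (s : seq R) : nat -> R := fun i => nth 0%R s i.

(* the subset of R^k defined by f, in the free variables 0..k-1 *)
Definition defset (k : nat) (f : rformula) (x : k.-tuple R) : Prop :=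
  fholds (env_of x) f.

(* the relation on R^k x R^l defined by f, in variables 0..k+l-1 *)
Definition defrel (k l : nat) (f : rformula) (x : k.-tuple R) (y : l.-tuple R) : Prop :=
  fholds (env_of (x ++ y)) f.

(* A ring has near linear Zarankiewicz bounds if every bipartite graph
   definable with parameters in it has: vertex sorts V subset R^k and
   W subset R^l defined by fV, fW, edge relation E subset V x W defined
   by fE. *)
Definition ring_NLZB : Prop :=
  forall (k l : nat) (fV fW fE : rformula),
    near_linear_zarankiewicz (@defset k fV) (@defset l fW) (@defrel k l fE).
End RingLogic.

Definition char_zero (R : pzRingType) : Prop := forall n : nat, ((n.+1)%:R)%R <> 0%R :> R.

Definition no_zero_divisors (R : pzRingType) : Prop :=
  forall a b : R, (a * b)%R = 0%R -> a = 0%R \/ b = 0%R.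

Definition infinite_type (T : eqType) : Prop := ~ exists s : seq T, forall x : T, x \in s.

From HB Require Import structures.
From mathcomp Require Import all_boot all_algebra all_field.
From mathcomp Require Import zify.
From Stdlib Require Reals Lra.

Set Implicit Arguments. Unset Strict Implicit. Unset Printing Implicit Defensive.

(* The graph of incidences between the lines y = a x + b (a in A, b in B) and the points
   (x, y) (x in A, y in C) is definable, and it is K_{2,2}-free as soon as
   (a1 - a2) (x1 - x2) = 0 forces a1 = a2 or x1 = x2.  If A A + B is contained in C,
   |C| <= 2 |B| and |B| <= |A|^2, it has n <= 3 |A|^3 vertices and at least |A| n / 3 edges,
   which beats any bound lam n^(7/6) once |A| is large.  Such configurations exist with |A|
   unbounded: in characteristic zero take initial segments of the naturals; in an infinite
   domain of characteristic p take the F_p-combinations of 1, t, ..., t^(d-1) for A and of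
   1, t, ..., t^(2d-1) for B = C.  If these stay small for every t, all nonzero elements
   satisfy x^N = 1 for a fixed N.  Herstein's proof of Jacobson's theorem, which rests on
   Wedderburn's theorem for the finite subrings it builds, then makes R commutative, hence a
   field with at most N + 1 elements. *)

(** * Estimates over the reals *)

Section RealEstimates.
Import Stdlib.Reals.Reals Stdlib.micromega.Lra.
(* Importing the reals rebinds the nat_scope notations; restore those of ssrnat. *)
Import ssrnat.
Local Open Scope R_scope.

Lemma Rpower_sixth_lt (lam : R) : 0 < lam -> exists S : nat, forall s n : nat,
  (S <= s)%N -> (0 < n)%N -> (n <= s ^ 4)%N -> lam * Rpower (INR n) (/ 6) < INR s.
Proof.
move=> lam0; have [S hS] := INR_unbounded (lam ^ 3).
exists S => s n /leP /le_INR hsS /leP /le_INR n0.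
move=> /leP /le_INR; rewrite !expnS expn0 muln1 -!multE !mult_INR => hns.
have {}hns : INR n <= INR s ^ 4 by simpl; lra.
have {}n0 : 0 < INR n by move: n0; rewrite S_INR /=; lra.
have s0 : 0 < INR s by have := pow_lt _ 3 lam0; lra.
pose u := Rpower (INR s) (/ 3).
have u0 : 0 < u by apply: exp_pos.
have u3 : u ^ 3 = INR s.
  by rewrite /u -Rpower_pow // Rpower_mult -[X in _ = X]Rpower_1 //; congr Rpower; simpl; field.
have n_u2 : Rpower (INR n) (/ 6) <= u ^ 2.
  apply: Rle_trans (Rle_Rpower_l _ _ _ _ (conj n0 hns)) _; first lra.
  rewrite /u -!Rpower_pow // !Rpower_mult; right; congr Rpower; simpl; field.
have lam_u : lam < u.
  apply: Rnot_le_lt => h.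
  have : u ^ 3 <= lam ^ 3 by apply: pow_incr; lra.
  lra.
have : lam * Rpower (INR n) (/ 6) <= lam * u ^ 2 by apply: Rmult_le_compat_l; lra.
have : lam * u ^ 2 < u * u ^ 2 by apply: Rmult_lt_compat_r; [apply: pow_lt|].
simpl in u3 |- *; lra.
Qed.

Lemma Rpower_seven_sixths_lt (lam : R) : 0 < lam -> exists S : nat, forall s n e : nat,
  (S <= s)%N -> (0 < n)%N -> (n <= 3 * s ^ 3)%N -> (s * n <= 3 * e)%N ->
  lam * Rpower (INR n) (1 + / 6) < INR e.
Proof.
move=> lam0; have [S hS] := Rpower_sixth_lt (Rmult_lt_0_compat 3 lam ltac:(lra) lam0).
exists (maxn S 3) => s n e; rewrite geq_max => /andP [sS s3] n0 ns3 sne.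
have {}hS := hS s n sS n0 ltac:(nia).
have {}n0 : 0 < INR n by apply: lt_0_INR; apply/ltP.
move/leP/le_INR: sne; rewrite -!multE !mult_INR Rpower_plus Rpower_1 //=.
have : INR n * (3 * lam * Rpower (INR n) (/ 6)) < INR n * INR s by apply: Rmult_lt_compat_l.
lra.
Qed.

Lemma near_linear_zarankiewicz_sparse (V W : eqType) (inV : V -> Prop) (inW : W -> Prop)
    (E : V -> W -> Prop) :
  near_linear_zarankiewicz inV inW E -> exists S : nat, forall (s : nat) A B,
    (S <= s)%N -> fin_sub inV inW A B -> Kfree E 2 2 A B ->
    (0 < nverts A B)%N -> (nverts A B <= 3 * s ^ 3)%N -> (3 * nedges E A B < s * nverts A B)%N.
Proof.
move=> /(_ 2%N (/ 6) ltac:(lra)) [lam [lam0 bound]].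
have [S large] := Rpower_seven_sixths_lt lam0.
exists S => s A B sS finAB freeAB n0 ns3; rewrite ltnNge; apply/negP => dense.
have := large _ _ _ sS n0 ns3 dense; have := bound A B finAB freeAB; lra.
Qed.
End RealEstimates.

Import GRing.Theory.
Local Open Scope ring_scope.

(** * Point-line incidence graphs *)

Lemma edgebP (V W : eqType) (E : V -> W -> Prop) a b : edgeb E a b <-> E a b.
Proof. by rewrite /edgeb; case: ClassicalEpsilon.excluded_middle_informative. Qed.

Section IncidenceGraph.
Variable R : pzRingType.

Definition trivial_formula : rformula R := FEq (TZero R) (TZero R).

Definition line_incidence : rformula R :=
  FEq (TVar R 3) (TAdd (TMul (TVar R 0) (TVar R 2)) (TVar R 1)).

Lemma line_incidenceE (a b x y : R) :
  defrel line_incidence [tuple a; b] [tuple x; y] <-> y = a * x + b.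
Proof. by []. Qed.

Definition grid (X Y : seq R) : seq (2.-tuple R) := [seq [tuple x; y] | x <- X, y <- Y].

Lemma tuple2_inj (x y x' y' : R) : [tuple x; y] = [tuple x'; y'] -> x = x' /\ y = y'.
Proof. by move=> /(congr1 val) [-> ->]. Qed.

Lemma grid_uniq (X Y : seq R) : uniq X -> uniq Y -> uniq (grid X Y).
Proof. by move=> uX uY; apply: allpairs_uniq => // -[x y] [x' y'] _ _ /tuple2_inj [-> ->]. Qed.

Lemma gridP (X Y : seq R) v :
  v \in grid X Y -> exists x y, [/\ x \in X, y \in Y & v = [tuple x; y]].
Proof. by case/allpairsP => -[x y] [hx hy ->]; exists x, y. Qed.

Lemma mem_grid (X Y : seq R) x y : x \in X -> y \in Y -> [tuple x; y] \in grid X Y.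
Proof. exact: allpairs_f. Qed.

Definition regular_differences (A : seq R) : Prop :=
  forall a1 a2 x1 x2, a1 \in A -> a2 \in A -> x1 \in A -> x2 \in A ->
    (a1 - a2) * (x1 - x2) = 0 -> a1 = a2 \/ x1 = x2.

Lemma lines_meet_once (A : seq R) a1 b1 a2 b2 x1 y1 x2 y2 : regular_differences A ->
  a1 \in A -> a2 \in A -> x1 \in A -> x2 \in A ->
  y1 = a1 * x1 + b1 -> y2 = a1 * x2 + b1 -> y1 = a2 * x1 + b2 -> y2 = a2 * x2 + b2 ->
  (a1 = a2 /\ b1 = b2) \/ (x1 = x2 /\ y1 = y2).
Proof.
move=> regA ha1 ha2 hx1 hx2 e11 e12 e21 e22.
have : (a1 - a2) * (x1 - x2) = 0.
  rewrite mulrBl !mulrBr.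
  have -> : a1 * x1 - a1 * x2 = y1 - y2 by rewrite e11 e12 opprD addrACA subrr addr0.
  have -> : a2 * x1 - a2 * x2 = y1 - y2 by rewrite e21 e22 opprD addrACA subrr addr0.
  exact: subrr.
case/(regA _ _ _ _ ha1 ha2 hx1 hx2) => [ea|ex]; [left|right].
  by split=> //; apply: (@addrI _ (a1 * x1)); rewrite -e11 ea -e21.
by split=> //; rewrite e11 e12 ex.
Qed.

Lemma incidence_K22_free (A B C : seq R) : regular_differences A ->
  Kfree (defrel line_incidence) 2 2 (grid A B) (grid A C).
Proof.
move=> regA [L [Q [uL [sizeL [sL [uQ [sizeQ [sQ hE]]]]]]]].
case: L uL sizeL sL hE => [|l1 [|l2 [|? ?]]] //= /andP [l12 _] _ sL hE.
case: Q uQ sizeQ sQ hE => [|q1 [|q2 [|? ?]]] //= /andP [q12 _] _ sQ hE.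
have mem1 (T : eqType) (u v : T) : u \in [:: u; v] by rewrite mem_head.
have mem2 (T : eqType) (u v : T) : v \in [:: u; v] by rewrite !inE eqxx orbT.
have [a1 [b1 [ha1 _ el1]]] := gridP (sL _ (mem1 _ l1 l2)).
have [a2 [b2 [ha2 _ el2]]] := gridP (sL _ (mem2 _ l1 l2)).
have [x1 [y1 [hx1 _ eq1]]] := gridP (sQ _ (mem1 _ q1 q2)).
have [x2 [y2 [hx2 _ eq2]]] := gridP (sQ _ (mem2 _ q1 q2)).
subst l1 l2 q1 q2.
have /line_incidenceE e11 := hE _ _ (mem1 _ _ _) (mem1 _ _ _).
have /line_incidenceE e12 := hE _ _ (mem1 _ _ _) (mem2 _ _ _).
have /line_incidenceE e21 := hE _ _ (mem2 _ _ _) (mem1 _ _ _).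
have /line_incidenceE e22 := hE _ _ (mem2 _ _ _) (mem2 _ _ _).
case: (lines_meet_once regA ha1 ha2 hx1 hx2 e11 e12 e21 e22) => -[e1 e2].
  by move: l12; rewrite e1 e2 inE eqxx.
by move: q12; rewrite e1 e2 inE eqxx.
Qed.

Lemma incidence_nedges (A B C : seq R) : uniq A ->
  (forall a x b, a \in A -> x \in A -> b \in B -> a * x + b \in C) ->
  (size A * size A * size B <= nedges (defrel line_incidence) (grid A B) (grid A C))%N.
Proof.
move=> uA closed; apply: (@leq_trans (\sum_(l <- grid A B) size A)).
  by rewrite big_const_seq iter_addn_0 count_predT size_allpairs mulnA.
rewrite /nedges [leqRHS]big_seq big_seq; apply: leq_sum => l.
case/gridP=> a [b [ha hb ->]]; rewrite -size_filter.
have -> : size A = size [seq [tuple x; a * x + b] | x <- A] by rewrite size_map.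
apply: uniq_leq_size; first by rewrite map_inj_uniq // => x x' /tuple2_inj [].
move=> _ /mapP [x hx ->]; rewrite mem_filter mem_grid ?closed // andbT.
exact/edgebP/line_incidenceE.
Qed.

Record affine_config (A B C : seq R) : Prop := AffineConfig {
  config_uniqA : uniq A;
  config_uniqB : uniq B;
  config_uniqC : uniq C;
  config_regular : regular_differences A;
  config_closed : forall a x b, a \in A -> x \in A -> b \in B -> a * x + b \in C;
  config_sizeC : (size C <= 2 * size B)%N;
  config_sizeB : (size B <= size A ^ 2)%N;
  config_sizeB_gt0 : (0 < size B)%N }.

Definition large_affine_configs : Prop :=
  forall L : nat, exists A B C : seq R, affine_config A B C /\ (L <= size A)%N.

End IncidenceGraph.

Lemma large_affine_configs_not_NLZB (R : pzRingType) : large_affine_configs R -> ~ ring_NLZB R.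
Proof.
move=> configs /(_ 2%N 2%N (trivial_formula R) (trivial_formula R) (line_incidence R)).
move=> /near_linear_zarankiewicz_sparse [S sparse].
have [A [B [C [[uA uB uC regA closed sC sB B0] sA]]]] := configs S.
have fin : fin_sub (defset (trivial_formula R)) (defset (trivial_formula R)) (grid A B) (grid A C).
  by split; [exact: grid_uniq | split; [exact: grid_uniq | split]].
have := sparse (size A) _ _ sA fin (incidence_K22_free (B:=B) (C:=C) regA).
have := incidence_nedges uA closed.
rewrite /nverts !size_allpairs; nia.
Qed.

(** * Characteristic zero *)

Section CharZero.
Variable R : pzRingType.
Hypothesis charR0 : char_zero R.

Lemma char_zero_intr_eq0 (z : int) : z%:~R = 0 :> R -> z = 0.
Proof.
case: z => n; first by case: n => // n /charR0.
by rewrite NegzE mulrNz => /eqP; rewrite oppr_eq0 => /eqP /charR0.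
Qed.

Definition nat_range (k : nat) : seq R := [seq i%:R | i <- iota 0 k].

Lemma nat_rangeP k x : reflect (exists2 i, (i < k)%N & x = i%:R) (x \in nat_range k).
Proof.
apply: (iffP mapP) => -[i]; first by rewrite mem_iota => /andP [_ ik] ->; exists i.
by move=> ik ->; exists i; rewrite ?mem_iota.
Qed.

Lemma nat_range_uniq k : uniq (nat_range k).
Proof.
rewrite map_inj_uniq ?iota_uniq // => i j eij.
have : (i%:Z - j%:Z)%:~R = 0 :> R by rewrite intrB -!pmulrn eij subrr.
by move/char_zero_intr_eq0/eqP; rewrite subr_eq0 => /eqP [].
Qed.

Lemma nat_range_regular k : regular_differences (nat_range k).
Proof.
move=> a1 a2 x1 x2 /nat_rangeP [i1 _ ->] /nat_rangeP [i2 _ ->].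
move=> /nat_rangeP [j1 _ ->] /nat_rangeP [j2 _ ->].
rewrite !pmulrn -!intrB -intrM => /char_zero_intr_eq0 /eqP.
by rewrite mulf_eq0 !subr_eq0 => /orP [] /eqP [->]; [left | right].
Qed.

Lemma char_zero_large_affine_configs : large_affine_configs R.
Proof.
move=> L; pose k := L.+1; exists (nat_range k), (nat_range (k ^ 2)), (nat_range (2 * k ^ 2)).
have size_range m : size (nat_range m) = m by rewrite size_map size_iota.
split; last by rewrite size_range.
split; rewrite ?size_range ?nat_range_uniq ?expn_gt0 //; first exact: nat_range_regular.
move=> _ _ _ /nat_rangeP [i hi ->] /nat_rangeP [j hj ->] /nat_rangeP [l hl ->].
by rewrite -natrM -natrD; apply/nat_rangeP; exists (i * j + l)%N => //; nia.
Qed.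
End CharZero.

(** * Positive characteristic *)

Section SeqClosure.
Variable R : pzRingType.
Implicit Type S : seq R.

Lemma mem_sum S (I : Type) (r : seq I) (P : pred I) (F : I -> R) :
  0 \in S -> {in S &, forall u v, u + v \in S} -> (forall i, P i -> F i \in S) ->
  \sum_(i <- r | P i) F i \in S.
Proof. by move=> S0 SD SF; apply: (big_ind (fun x => x \in S)). Qed.

Lemma mem_mulrn S u n : 0 \in S -> {in S &, forall u v, u + v \in S} -> u \in S -> u *+ n \in S.
Proof. by move=> S0 SD Su; elim: n => [|n IH]; rewrite ?mulr0n // mulrS SD. Qed.

Lemma mem_exprn S u n : 1 \in S -> {in S &, forall u v, u * v \in S} -> u \in S -> u ^+ n \in S.
Proof. by move=> S1 SM Su; elim: n => [|n IH]; rewrite ?expr0 // exprS SM. Qed.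

Lemma domain_regular S : no_zero_divisors R -> regular_differences S.
Proof. by move=> dom ? ? ? ? _ _ _ _ /dom [] /eqP; rewrite subr_eq0 => /eqP; [left | right]. Qed.

End SeqClosure.

Section DomainPowers.
Variable R : pzRingType.
Hypothesis domR : no_zero_divisors R.

Lemma domain_expf_neq0 (t : R) n : t != 0 -> t ^+ n != 0.
Proof.
move=> t0; elim: n => [|n IH]; last by rewrite exprS; apply/eqP => /domR [] /eqP; apply/negP.
by rewrite expr0; apply: contra t0 => /eqP R10; rewrite -[t]mulr1 R10 mulr0.
Qed.

Lemma domain_expr_period (t : R) i j : t != 0 -> (i <= j)%N -> t ^+ i = t ^+ j -> t ^+ (j - i) = 1.
Proof.
move=> t0 ij eij; apply/eqP; rewrite -subr_eq0; apply/eqP.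
have : t ^+ i * (t ^+ (j - i) - 1) = 0 by rewrite mulrBr mulr1 -exprD subnKC // eij subrr.
by case/domR => // /eqP; rewrite (negbTE (domain_expf_neq0 i t0)).
Qed.

End DomainPowers.

Section PowerSpan.
Variables (R : pzRingType) (p : nat).
Hypothesis charRp : p.+1%:R = 0 :> R.

Lemma natr_modp m : (m %% p.+1)%:R = m%:R :> R.
Proof. by rewrite {2}(divn_eq m p.+1) natrD natrM charRp mulr0 add0r. Qed.

Lemma oppr_charp (u : R) : - u = u *+ p.
Proof.
by apply/eqP; rewrite eq_sym -addr_eq0 -mulrSr -mulr_natl charRp mul0r.
Qed.

Definition powcomb (t : R) d (c : {ffun 'I_d -> 'I_p.+1}) : R :=
  \sum_(i < d) (c i)%:R * t ^+ i.

Definition powspan (t : R) d : seq R :=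
  [seq powcomb t c | c <- enum {ffun 'I_d -> 'I_p.+1}].

Lemma powspanP t d u :
  reflect (exists c : {ffun 'I_d -> 'I_p.+1}, u = powcomb t c) (u \in powspan t d).
Proof.
apply: (iffP mapP) => -[c]; first by move=> _ ->; exists c.
by move=> ->; exists c; rewrite ?mem_enum.
Qed.

Lemma mem_powspan t d (c : {ffun 'I_d -> 'I_p.+1}) : powcomb t c \in powspan t d.
Proof. by apply/powspanP; exists c. Qed.

Lemma powspan0 t d : 0 \in powspan t d.
Proof.
apply/powspanP; exists [ffun=> ord0].
by rewrite /powcomb big1 // => i _; rewrite ffunE mul0r.
Qed.

Lemma powspanD t d : {in powspan t d &, forall u v, u + v \in powspan t d}.
Proof.
move=> _ _ /powspanP [c ->] /powspanP [c' ->]; apply/powspanP.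
exists [ffun i => inZp (c i + c' i)]; rewrite /powcomb -big_split /=.
by apply: eq_bigr => i _; rewrite ffunE /= natr_modp natrD mulrDl.
Qed.

Lemma powspanN t d : {in powspan t d, forall u, - u \in powspan t d}.
Proof. by move=> u hu; rewrite oppr_charp mem_mulrn ?powspan0 //; apply: powspanD. Qed.

Lemma powspan_monomial t d m l : (l < d)%N -> m%:R * t ^+ l \in powspan t d.
Proof.
move=> ld; apply/powspanP; exists [ffun i : 'I_d => if val i == l then inZp m else ord0].
rewrite /powcomb (bigD1 (Ordinal ld)) //= ffunE eqxx /= natr_modp big1 ?addr0 // => i.
by rewrite ffunE -val_eqE /=; case: eqP => // _ _; rewrite mul0r.
Qed.

Lemma powcomb_mul t d (c c' : {ffun 'I_d -> 'I_p.+1}) : powcomb t c * powcomb t c' =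
  \sum_(i < d) \sum_(j < d) (c i * c' j)%:R * t ^+ (i + j).
Proof.
rewrite /powcomb mulr_suml; apply: eq_bigr => i _; rewrite mulr_sumr; apply: eq_bigr => j _.
by rewrite natrM exprD !mulrA -(mulrA _ (t ^+ i)) (commr_nat (t ^+ i)) !mulrA.
Qed.

Lemma powcomb_comm t d (c c' : {ffun 'I_d -> 'I_p.+1}) :
  powcomb t c * powcomb t c' = powcomb t c' * powcomb t c.
Proof.
rewrite !powcomb_mul exchange_big /=.
by apply: eq_bigr => i _; apply: eq_bigr => j _; rewrite mulnC addnC.
Qed.

Lemma powcomb_mul_mem (S : seq R) t d (c c' : {ffun 'I_d -> 'I_p.+1}) :
  0 \in S -> {in S &, forall u v, u + v \in S} ->
  (forall m i j, (i < d)%N -> (j < d)%N -> m%:R * t ^+ (i + j) \in S) ->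
  powcomb t c * powcomb t c' \in S.
Proof.
by move=> S0 SD Smono; rewrite powcomb_mul; do 2!apply: mem_sum => // ? _; apply: Smono.
Qed.

Lemma powcomb_split t d (c : {ffun 'I_(d + d) -> 'I_p.+1}) :
  powcomb t c =
    powcomb t [ffun i => c (lshift d i)] + t ^+ d * powcomb t [ffun i => c (rshift d i)].
Proof.
rewrite /powcomb big_split_ord /= mulr_sumr; congr (_ + _); apply: eq_bigr => i _.
  by rewrite ffunE.
by rewrite ffunE /= exprD !mulrA (commr_nat (t ^+ d)).
Qed.

Lemma powspan_affine_config t d : no_zero_divisors R ->
  affine_config (undup (powspan t d)) (undup (powspan t (d + d))) (undup (powspan t (d + d))).
Proof.
move=> dom; split; rewrite ?undup_uniq //; first exact: domain_regular.
- move=> a x b; rewrite !mem_undup => /powspanP [c ->] /powspanP [c' ->] hb.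
  apply: powspanD => //; apply: powcomb_mul_mem; [exact: powspan0|exact: powspanD|].
  by move=> m i j id jd; apply: powspan_monomial; lia.
- by rewrite leq_pmull.
- rewrite -mulnn -(size_allpairs (fun u v => u + t ^+ d * v)).
  apply: uniq_leq_size; first exact: undup_uniq.
  move=> u; rewrite mem_undup => /powspanP [c ->]; rewrite powcomb_split.
  by apply: allpairs_f; rewrite mem_undup mem_powspan.
- by rewrite lt0n size_eq0; apply/eqP => h; have := powspan0 t (d + d); rewrite -mem_undup h.
Qed.

End PowerSpan.

(* The factor 2 only makes the exponent larger than 1. *)
Lemma bounded_powspan_torsion (R : pzRingType) p L : p.+1%:R = 0 :> R -> no_zero_divisors R ->
  (forall t : R, size (undup (powspan p t L)) < L)%N ->
  forall t : R, t != 0 -> t ^+ (L`! * 2) = 1.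
Proof.
move=> charRp domR small t t0.
have : ~~ uniq [seq t ^+ i | i <- iota 0 L].
  apply: contraTN (small t) => upow; rewrite -leqNgt -{1}(size_iota 0 L).
  rewrite -(size_map (fun i => t ^+ i)); apply: uniq_leq_size upow _.
  move=> u /mapP [i]; rewrite mem_iota mem_undup => /andP [_ iL] ->.
  by have := @powspan_monomial R p charRp t L 1 i iL; rewrite mul1r.
case/(uniqPn 0) => i [j [ij]]; rewrite size_map size_iota => jL.
have iL := ltn_trans ij jL.
rewrite !(nth_map 0) ?nth_iota ?size_iota ?add0n //.
move/(domain_expr_period domR t0 (ltnW ij)) => period.
have /dvdnP [k ->] : (j - i %| L`!)%N by apply: dvdn_fact; rewrite subn_gt0 ij; lia.
by rewrite -mulnA mulnC !exprM period !expr1n.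
Qed.

(** * Jacobson's theorem for torsion division rings *)

Section FinSubring.
Variables (D : unitRingType) (S : seq D).

(* The closure proof is an argument of the type so that the instances below survive the
   section. *)
Definition fin_subring of divring_closed (fun x : D => x \in S) : Type := seq_sub S.

Variable Sdiv : divring_closed (fun x : D => x \in S).

HB.instance Definition _ := SubType.on (fin_subring Sdiv).
HB.instance Definition _ := Finite.on (fin_subring Sdiv).
HB.instance Definition _ := GRing.SubChoice_isSubNzRing.Build D _ (fin_subring Sdiv) Sdiv.
HB.instance Definition _ := GRing.SubNzRing_isSubUnitRing.Build D _ (fin_subring Sdiv) Sdiv.

Lemma fin_subring_domain : no_zero_divisors D -> GRing.integral_domain_axiom (fin_subring Sdiv).
Proof.
move=> domD u v /(congr1 val) /domD [] uv0; apply/orP; [left | right]; exact/eqP/val_inj.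
Qed.

Lemma fin_divring_comm : no_zero_divisors D -> {in S &, forall x y, x * y = y * x}.
Proof.
move=> domD x y xS yS.
by have /(congr1 val) := finDomain_mulrC (fin_subring_domain domD) (SeqSub xS) (SeqSub yS).
Qed.

End FinSubring.

Section TorsionDivisionRing.
Variables (D : unitRingType) (p N : nat).
Hypotheses (charDp : p.+1%:R = 0 :> D) (domD : no_zero_divisors D) (N_gt1 : (1 < N)%N).
Hypothesis torsionD : forall x : D, x != 0 -> x ^+ N = 1.

Lemma torsion_mulr_expr (x : D) : x != 0 -> x * x ^+ N.-1 = 1.
Proof. by move=> x0; rewrite -exprS prednK ?torsionD // ltnW. Qed.

Lemma torsion_unit (x : D) : x != 0 -> x \is a GRing.unit.
Proof.
move=> x0; apply/unitrP; exists (x ^+ N.-1).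
by rewrite torsion_mulr_expr // -exprSr prednK ?torsionD // ltnW.
Qed.

Lemma torsion_invE (x : D) : x != 0 -> x^-1 = x ^+ N.-1.
Proof.
by move=> x0; apply: (mulrI (torsion_unit x0)); rewrite mulrV ?torsion_unit ?torsion_mulr_expr.
Qed.

Lemma torsion_expr_mod (x : D) m : x != 0 -> x ^+ m = x ^+ (m %% N).
Proof. by move=> x0; rewrite {1}(divn_eq m N) exprD mulnC exprM torsionD // expr1n mul1r. Qed.

Lemma torsion_divring_closed (S : seq D) : 1 \in S ->
  {in S &, forall u v, u - v \in S} -> {in S &, forall u v, u * v \in S} ->
  divring_closed (fun x => x \in S).
Proof.
move=> S1 SB SM; split=> [|u v uS vS|u v uS vS]; [exact: S1 | exact: SB |].
apply: (SM); first exact: uS.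
have [->|v0] := eqVneq v 0; first by rewrite invr0 -(subrr 1) SB.
by rewrite torsion_invE // mem_exprn.
Qed.

Section NonCentral.
Variables a b : D.
Hypothesis ab_neq : a * b != b * a.

Let K := powspan p a N.

Lemma a_neq0 : a != 0.
Proof. by apply: contra ab_neq => /eqP ->; rewrite mul0r mulr0. Qed.

Lemma K_natr n : n%:R \in K.
Proof. by have := powspan_monomial charDp a n (ltnW N_gt1); rewrite mulr1. Qed.

Lemma K_a : a \in K.
Proof. by have := powspan_monomial charDp a 1 N_gt1; rewrite mul1r. Qed.

Lemma K_mul : {in K &, forall u v, u * v \in K}.
Proof.
move=> _ _ /powspanP [c ->] /powspanP [c' ->].
apply: powcomb_mul_mem; [exact: powspan0 | exact: powspanD |] => m i j _ _.
by rewrite (torsion_expr_mod _ a_neq0) powspan_monomial // ltn_pmod // ltnW.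
Qed.

Lemma K_sub : {in K &, forall u v, u - v \in K}.
Proof. by move=> u v uK vK; rewrite powspanD // powspanN. Qed.

Lemma K_comm : {in K &, forall u v, u * v = v * u}.
Proof. by move=> _ _ /powspanP [c ->] /powspanP [c' ->]; apply: powcomb_comm. Qed.

Let Kdiv := torsion_divring_closed (K_natr 1) K_sub K_mul.
Local Notation KF := (fin_subring Kdiv).

Lemma KF_comm : @commutative KF KF *%R.
Proof. by move=> x y; apply: val_inj; apply: K_comm; apply: valP. Qed.
HB.instance Definition _ := GRing.PzRing_hasCommutativeMul.Build KF KF_comm.
HB.instance Definition _ :=
  GRing.ComUnitRing_isIntegral.Build KF (fin_subring_domain (Sdiv:=Kdiv) domD).

Lemma KF_field : GRing.field_axiom KF.
Proof. by move=> x x0; rewrite qualifE /= torsion_unit // -(rmorph0 val) (inj_eq val_inj). Qed.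
HB.instance Definition _ := GRing.UnitRing_isField.Build KF KF_field.

Let ka : KF := SeqSub K_a.

(* X acts by right multiplication by a, constants by left multiplication. *)
Definition opeval (P : {poly KF}) (y : D) : D := \sum_(i < size P) val P`_i * (y * a ^+ i).

Lemma opeval_widen (P : {poly KF}) y n :
  (size P <= n)%N -> opeval P y = \sum_(i < n) val P`_i * (y * a ^+ i).
Proof.
move=> Pn; rewrite /opeval (big_ord_widen n (fun i => val P`_i * (y * a ^+ i)) Pn) big_mkcond.
apply: eq_bigr => i _; case: ifP => // /negbT; rewrite -leqNgt => Pi.
by rewrite nth_default // mul0r.
Qed.

Lemma opevalB (P Q : {poly KF}) y : opeval (P - Q) y = opeval P y - opeval Q y.
Proof.
have PQ := leq_maxl (size P) (size Q); have QP := leq_maxr (size P) (size Q).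
have PQn : (size (P - Q)%R <= maxn (size P) (size Q))%N by rewrite -(size_polyN Q) size_polyD.
rewrite (opeval_widen y PQ) (opeval_widen y QP) (opeval_widen y PQn) -sumrB.
by apply: eq_bigr => i _; rewrite coefB /= mulrBl.
Qed.

Lemma opevalBr (P : {poly KF}) y z : opeval P (y - z) = opeval P y - opeval P z.
Proof. by rewrite /opeval -sumrB; apply: eq_bigr => i _; rewrite mulrBl mulrBr. Qed.

Lemma opeval_mulX (P : {poly KF}) y : opeval (P * 'X) y = opeval P (y * a).
Proof.
have PXn : (size (P * 'X)%R <= (size P).+1)%N.
  by apply: leq_trans (size_polyMleq _ _) _; rewrite size_polyX addn2.
rewrite (opeval_widen y PXn) big_ord_recl coefMX /= mul0r add0r /opeval.
by apply: eq_bigr => i _; rewrite coefMX /= exprS mulrA.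
Qed.

Lemma opeval_mulC (P : {poly KF}) (c : KF) y : opeval (P * c%:P) y = opeval P (val c * y).
Proof.
have PCn : (size (P * c%:P)%R <= size P)%N by rewrite mulrC mul_polyC size_scale_leq.
rewrite (opeval_widen y PCn) /opeval; apply: eq_bigr => i _; by rewrite coefMC /= !mulrA.
Qed.

Lemma opeval_mulXsubC (P : {poly KF}) (c : KF) y :
  opeval (P * ('X - c%:P)) y = opeval P (y * a - val c * y).
Proof. by rewrite mulrBr opevalB opeval_mulX opeval_mulC opevalBr. Qed.

Lemma opevalXn n y : opeval 'X^n y = y * a ^+ n.
Proof.
rewrite /opeval size_polyXn big_ord_recr /= big1 ?add0r => [|i _].
  by rewrite coefXn eqxx mul1r.
by rewrite coefXn ltn_eqF //= mul0r.
Qed.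

Lemma opeval_prod_XsubC_eq0 (s : seq KF) (P : pred KF) :
  (forall c, P c -> forall y, y * a - val c * y = 0 -> y = 0) ->
  forall y, opeval (\prod_(c <- s | P c) ('X - c%:P)) y = 0 -> y = 0.
Proof.
move=> Pinj; elim: s => [|c s IH] y.
  by rewrite big_nil -(expr0 'X) opevalXn expr0 mulr1.
rewrite big_cons; case: ifP => Pc; last exact: IH.
by rewrite mulrC opeval_mulXsubC => /IH; apply: Pinj.
Qed.

(* The product of the X - c over c in K is X^|K| - X, which acts as 0 since a^|K| = a; the
   factor for c = a sends b to b a - a b <> 0, so another factor is not injective. *)
Lemma exists_eigenvector : exists c : KF, c != ka /\ exists2 z : D, z != 0 & z * a = val c * z.
Proof.
apply: Classical_Prop.NNPP => no_eigen.
have inj c : c != ka -> forall y, y * a - val c * y = 0 -> y = 0.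
  move=> cka y /eqP; rewrite subr_eq0 => /eqP ya; apply: Classical_Prop.NNPP => y0.
  by apply: no_eigen; exists c; split=> //; exists y => //; apply/eqP.
have genP := finField_genPoly KF; rewrite (bigD1 ka) //= mulrC in genP.
have := opeval_mulXsubC (\prod_(c | c != ka) ('X - c%:P)) ka b.
rewrite -genP opevalB opevalXn -[X in opeval X]expr1 opevalXn expr1.
have a_card := congr1 val (expf_card ka); rewrite rmorphXn /= in a_card.
rewrite a_card subrr => /esym /(opeval_prod_XsubC_eq0 inj) /eqP.
by rewrite subr_eq0 eq_sym (negbTE ab_neq).
Qed.

Section Eigenvector.
Variables lam z : D.
Hypotheses (lamK : lam \in K) (lam_neq_a : lam != a) (z_neq0 : z != 0).
Hypothesis z_eigen : z * a = lam * z.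

Lemma eigen_exprn i : z * a ^+ i = lam ^+ i * z.
Proof.
elim: i => [|i IH]; first by rewrite !expr0 mulr1 mul1r.
by rewrite exprSr mulrA IH -mulrA z_eigen mulrA -exprSr.
Qed.

Lemma eigen_commute k i : k \in K -> exists2 k', k' \in K & z ^+ i * k = k' * z ^+ i.
Proof.
elim: i k => [|i IH] k kK; first by exists k; rewrite // expr0 mul1r mulr1.
have [k1 k1K e1] : exists2 k1, k1 \in K & z * k = k1 * z.
  case/powspanP: kK => c ->; exists (\sum_(j < N) (c j)%:R * lam ^+ j).
    apply: mem_sum; [exact: powspan0 | exact: powspanD |] => j _.
    by apply: K_mul; [exact: K_natr | apply: mem_exprn => //; [exact: K_natr 1 | exact: K_mul]].
  rewrite mulr_sumr mulr_suml; apply: eq_bigr => j _.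
  by rewrite mulrA (commr_nat z) -mulrA eigen_exprn mulrA.
have [k2 k2K e2] := IH _ k1K.
by exists k2 => //; rewrite exprSr -mulrA e1 mulrA e2 -mulrA -exprSr.
Qed.

Definition zspan : seq D :=
  [seq \sum_(i < N) val (f i) * z ^+ i | f : {ffun 'I_N -> KF} <- enum {ffun 'I_N -> KF}].

Lemma zspanP u :
  reflect (exists f : {ffun 'I_N -> KF}, u = \sum_(i < N) val (f i) * z ^+ i) (u \in zspan).
Proof.
apply: (iffP mapP) => -[f]; first by move=> _ ->; exists f.
by move=> ->; exists f; rewrite ?mem_enum.
Qed.

Lemma zspan0 : 0 \in zspan.
Proof. by apply/zspanP; exists 0; rewrite big1 // => i _; rewrite ffunE mul0r. Qed.

Lemma zspanD : {in zspan &, forall u v, u + v \in zspan}.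
Proof.
move=> _ _ /zspanP [f ->] /zspanP [g ->]; apply/zspanP; exists (f + g).
by rewrite -big_split; apply: eq_bigr => i _; rewrite ffunE /= mulrDl.
Qed.

Lemma zspanB : {in zspan &, forall u v, u - v \in zspan}.
Proof.
by move=> u v uT vT; rewrite (oppr_charp charDp) zspanD ?mem_mulrn ?zspan0 //; apply: zspanD.
Qed.

Lemma zspan_monomial k l : k \in K -> (l < N)%N -> k * z ^+ l \in zspan.
Proof.
move=> kK lN; apply/zspanP.
exists [ffun i : 'I_N => if val i == l then SeqSub kK : KF else 0].
rewrite (bigD1 (Ordinal lN)) //= ffunE eqxx big1 ?addr0 // => i.
by rewrite ffunE -val_eqE /=; case: eqP => // _ _; rewrite mul0r.
Qed.

Lemma zspanM : {in zspan &, forall u v, u * v \in zspan}.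
Proof.
move=> _ _ /zspanP [f ->] /zspanP [g ->]; rewrite mulr_suml.
apply: mem_sum; [exact: zspan0 | exact: zspanD |] => i _; rewrite mulr_sumr.
apply: mem_sum; [exact: zspan0 | exact: zspanD |] => j _.
have [k kK e] := eigen_commute i (valP (g j)).
rewrite -mulrA (mulrA (z ^+ i)) e -!mulrA -exprD !mulrA (torsion_expr_mod _ z_neq0).
by rewrite zspan_monomial ?K_mul ?ltn_pmod ?(ltnW N_gt1) //; apply: valP.
Qed.

Lemma zspan_K k : k \in K -> k \in zspan.
Proof. by move=> kK; have := zspan_monomial kK (ltnW N_gt1); rewrite mulr1. Qed.

(* zspan is a finite division ring containing a and z, so a and z commute by Wedderburn. *)
Lemma eigenvector_false : False.
Proof.
have zT : z \in zspan by have := zspan_monomial (K_natr 1) N_gt1; rewrite mul1r expr1.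
have Tdiv := torsion_divring_closed (zspan_K (K_natr 1)) zspanB zspanM.
have := fin_divring_comm Tdiv domD (zspan_K K_a) zT.
rewrite z_eigen => /eqP; rewrite -subr_eq0 -mulrBl => /eqP /domD [/eqP | /eqP].
  by rewrite subr_eq0 eq_sym (negbTE lam_neq_a).
by rewrite (negbTE z_neq0).
Qed.

End Eigenvector.

Lemma noncentral_false : False.
Proof.
have [lam [lam_neq [z z0 z_eigen]]] := exists_eigenvector.
apply: (eigenvector_false (valP lam) _ z0 z_eigen).
by apply: contra lam_neq => /eqP lam_a; apply/eqP/val_inj.
Qed.

End NonCentral.

Lemma torsion_domain_comm : @commutative D D *%R.
Proof. by move=> x y; apply/eqP/negPn/negP => /noncentral_false. Qed.
End TorsionDivisionRing.

Lemma infinite_type_uniq_seq (T : eqType) k :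
  infinite_type T -> exists s : seq T, uniq s /\ size s = k.
Proof.
move=> infT; elim: k => [|k [s [us sk]]]; first by exists [::].
have [x xs] : exists x, x \notin s.
  apply: Classical_Prop.NNPP => all_in; apply: infT; exists s => x.
  by apply: Classical_Prop.NNPP => xs; apply: all_in; exists x; apply/negP.
by exists (x :: s); rewrite /= xs us sk.
Qed.

Section TorsionDomain.
Variables (R : pzRingType) (p N : nat).
Hypotheses (charRp : p.+1%:R = 0 :> R) (domR : no_zero_divisors R) (N_gt1 : (1 < N)%N).
Hypotheses (torsionR : forall x : R, x != 0 -> x ^+ N = 1) (R1_neq0 : (1 : R) != 0).

Definition torsion_unitRing : Type := R.
HB.instance Definition _ := GRing.PzRing.on torsion_unitRing.
HB.instance Definition _ := GRing.PzSemiRing_isNonZero.Build torsion_unitRing R1_neq0.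

Let nonzero : pred torsion_unitRing := fun x => x != 0.
Let torsion_inv (x : torsion_unitRing) : torsion_unitRing := x ^+ N.-1.

Lemma torsion_mulVr : {in nonzero, left_inverse 1 torsion_inv *%R}.
Proof. by move=> x x0; rewrite /torsion_inv -exprSr prednK ?torsionR // ltnW. Qed.

Lemma torsion_divrr : {in nonzero, right_inverse 1 torsion_inv *%R}.
Proof. by move=> x x0; rewrite /torsion_inv -exprS prednK ?torsionR // ltnW. Qed.

Lemma torsion_unitrP (x y : torsion_unitRing) : y * x = 1 /\ x * y = 1 -> nonzero x.
Proof. by case=> _ xy1; apply: contra R1_neq0 => /eqP x0; rewrite -xy1 x0 mul0r. Qed.

Lemma torsion_invr_out : {in [predC nonzero], torsion_inv =1 id}.
Proof. by move=> x /negbNE /eqP ->; rewrite /torsion_inv expr0n -(subnKC N_gt1). Qed.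

HB.instance Definition _ := GRing.NzRing_hasMulInverse.Build torsion_unitRing
  torsion_mulVr torsion_divrr torsion_unitrP torsion_invr_out.

Definition torsion_field : Type := torsion_unitRing.
HB.instance Definition _ := GRing.UnitRing.on torsion_field.
HB.instance Definition _ := GRing.PzRing_hasCommutativeMul.Build torsion_field
  (@torsion_domain_comm torsion_unitRing p N charRp domR N_gt1 torsionR).

Lemma torsion_field_domain : GRing.integral_domain_axiom torsion_field.
Proof. by move=> x y /domR [] ->; rewrite eqxx ?orbT. Qed.
HB.instance Definition _ := GRing.ComUnitRing_isIntegral.Build torsion_field torsion_field_domain.

Lemma torsion_field_axiom : GRing.field_axiom torsion_field.
Proof. by []. Qed.
HB.instance Definition _ := GRing.UnitRing_isField.Build torsion_field torsion_field_axiom.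

Lemma torsion_domain_not_infinite : ~ infinite_type R.
Proof.
move=> /(infinite_type_uniq_seq N.+2) [s [us sN]].
pose P : {poly torsion_field} := 'X^(N.+1) - 'X.
have sizeP : size P = N.+2.
  by rewrite size_polyDl size_polyXn // size_polyN size_polyX ltnS ltnW.
have rootsP : all (root P) (s : seq torsion_field).
  apply/allP => x _; rewrite /root !hornerE subr_eq0 exprS.
  by have [-> | /torsionR ->] := eqVneq x 0; rewrite ?mul0r ?mulr1.
by have := max_poly_roots (p := P) _ rootsP us; rewrite -size_poly_eq0 sizeP sN ltnn => /(_ isT).
Qed.

End TorsionDomain.

Lemma charp_large_affine_configs (R : pzRingType) p : p.+1%:R = 0 :> R ->
  no_zero_divisors R -> infinite_type R -> large_affine_configs R.
Proof.
move=> charRp domR infR L.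
have [[t large] | none] :=
  Classical_Prop.classic (exists t : R, L <= size (undup (powspan p t L)))%N.
  exists (undup (powspan p t L)), (undup (powspan p t (L + L))), (undup (powspan p t (L + L))).
  by split=> //; apply: powspan_affine_config.
exfalso.
have small (t : R) : (size (undup (powspan p t L)) < L)%N.
  by rewrite ltnNge; apply/negP => large; apply: none; exists t.
have R1_neq0 : (1 : R) != 0.
  by apply/eqP => R10; apply: infR; exists [:: 0] => x; rewrite inE -[x]mulr1 R10 mulr0.
have N_gt1 : (1 < L`! * 2)%N by have := fact_gt0 L; lia.
have torsion := bounded_powspan_torsion charRp domR small.
exact: (torsion_domain_not_infinite charRp domR N_gt1 torsion R1_neq0).
Qed.

Theorem proposition3p8 (R : pzRingType) :
  (char_zero R \/ (no_zero_divisors R /\ infinite_type R)) ->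
  ~ ring_NLZB R.
Proof.
move=> hyp; apply: large_affine_configs_not_NLZB.
have [charR0 | /Classical_Pred_Type.not_all_ex_not [p /Classical_Prop.NNPP charRp]] :=
  Classical_Prop.classic (char_zero R).
  exact: char_zero_large_affine_configs.
case: hyp => [/(_ p) // | [domR infR]].
exact: charp_large_affine_configs charRp domR infR.
Qed.
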